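(* For every $\mathbf z\in[0,1]^{N_e}$ one has $J(\mathbb H(\mathbf z))\le J(\mathbf z)$, where $J$ is the objective function defined in the context.
   Context: Fix integers $N_x,N_y,N_e\ge1$, event data $\mathbf x\in\{1,\dots,N_x\}^{N_e}$, $\mathbf y\in\{1,\dots,N_y\}^{N_e}$, $\mathbf t\in\mathbb R^{N_e}$ (event $k$ occurs at pixel $(x_k,y_k)$ at time $t_k$), a reference time $t_0\in\mathbb R$ and parameters $\lambda_1,\lambda_2\ge 0$. Let $\Omega=\{1,\dots,N_x\}\times\{1,\dots,N_y\}$ and $\mathbf b=(1,\dots,1)^\top\in\mathbb R^{N_e}$. The Heaviside function is $\mathbb H(s)=1$ if $s>0$, $\mathbb H(s)=0$ if $s\le0$, applied componentwise; $\odot$ is the Hadamard product. Convention: any quotient whose denominator vanishes is set to $0$, and $0\log 0=0$. For $\mathbf z\in\mathbb R^{N_e}$ let $\mathbf h=\mathbb H(\mathbf z)$, $n(\mathbf z)=\sum_k h_k$, $\mu_t(\mathbf z)=\mathbf h^\top\mathbf t/n(\mathbf z)$, $\mu_x(\mathbf z)=\mathbf h^\top\mathbf x/n(\mathbf z)$, $\mu_y(\mathbf z)=\mathbf h^\top\mathbf y/n(\mathbf z)$, $\theta_x(\mathbf z)=\dfrac{\mathbf h^\top\big((\mathbf t-\mu_t(\mathbf z)\mathbf b)\odot(\mathbf x-\mu_x(\mathbf z)\mathbf b)\big)}{\mathbf h^\top\big((\mathbf t-\mu_t(\mathbf z)\mathbf b)\odot(\mathbf t-\mu_t(\mathbf z)\mathbf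 b)\big)}$, and $\theta_y(\mathbf z)$ the same with $\mathbf y,\mu_y$ in place of $\mathbf x,\mu_x$. Warped event positions: $w_k(\mathbf z)=\big(x_k+(t_0-t_k)\theta_x(\mathbf z),\;y_k+(t_0-t_k)\theta_y(\mathbf z)\big)\in\mathbb R^2$. Let $\delta(0)=1$ and $\delta(\gamma)=0$ for $\gamma\neq0$. Image of warped events at pixel $(\hat x,\hat y)\in\Omega$: $I_{(\hat x,\hat y)}(\mathbf z)=\sum_{k=1}^{N_e} z_k\,\delta\big(\|w_k(\mathbf z)-(\hat x,\hat y)\|_2\big)$. Entropy: $E(\mathbf z)=\sum_{(\hat x,\hat y)\in\Omega} I_{(\hat x,\hat y)}(\mathbf z)\log I_{(\hat x,\hat y)}(\mathbf z)$. Variance terms: $V(\mathbf z,\mathbf x)=\frac1{N_x}\|\mathbf h\odot\mathbf x-\mu_x(\mathbf z)\mathbf b\|_2^2$, $V(\mathbf z,\mathbf y)=\frac1{N_x}\|\mathbf h\odot\mathbf y-\mu_y(\mathbf z)\mathbf b\|_2^2$. Objective: $J(\mathbf z)=-E(\mathbf z)+\frac{\lambda_1}{2}\big(V(\mathbf z,\mathbf x)+V(\mathbf z,\mathbf y)\big)+\frac{\lambda_2}{2}\|\mathbb H(\mathbf z)\|_2^2$. *)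

From HB Require Import structures.
From mathcomp Require Import all_boot all_order all_algebra.
From mathcomp Require Import all_classical all_reals.
From mathcomp Require Import exp.
Set Implicit Arguments. Unset Strict Implicit. Unset Printing Implicit Defensive.
Import Order.TTheory GRing.Theory Num.Theory.
Local Open Scope ring_scope.

Section Objective.
Variable R : realType.
(* N_x, N_y, N_e; event data x, y (pixel coordinates, natural numbers), t;
   reference time t0; parameters lambda1, lambda2. Events are indexed by 'I_Ne. *)
Variables (Nx Ny Ne : nat) (x y : 'I_Ne -> nat) (t : 'I_Ne -> R) (t0 l1 l2 : R).

Definition heav (s : R) : R := if 0 < s then 1 else 0.
Definition Hv (z : 'I_Ne -> R) : 'I_Ne -> R := fun k => heav (z k).

Definition sdiv (a b : R) : R := if b == 0 then 0 else a / b.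

Definition xr (k : 'I_Ne) : R := (x k)%:R.
Definition yr (k : 'I_Ne) : R := (y k)%:R.

Definition nev (z : 'I_Ne -> R) : R := \sum_k Hv z k.
Definition mu (v : 'I_Ne -> R) (z : 'I_Ne -> R) : R :=
  sdiv (\sum_k Hv z k * v k) (nev z).
Definition theta (v : 'I_Ne -> R) (z : 'I_Ne -> R) : R :=
  sdiv (\sum_k Hv z k * ((t k - mu t z) * (v k - mu v z)))
       (\sum_k Hv z k * ((t k - mu t z) * (t k - mu t z))).

Definition warp (z : 'I_Ne -> R) (k : 'I_Ne) : R * R :=
  (xr k + (t0 - t k) * theta xr z, yr k + (t0 - t k) * theta yr z).

Definition delta (g : R) : R := if g == 0 then 1 else 0.

Definition img (z : 'I_Ne -> R) (px py : R) : R :=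
  \sum_k z k * delta (Num.sqrt (((warp z k).1 - px) ^+ 2 + ((warp z k).2 - py) ^+ 2)).

Definition xlogx (a : R) : R := if a == 0 then 0 else a * ln a.

(* entropy: sum over pixels (i+1, j+1), i < Nx, j < Ny, i.e. over Omega *)
Definition entropy (z : 'I_Ne -> R) : R :=
  \sum_(i < Nx) \sum_(j < Ny) xlogx (img z (i.+1)%:R (j.+1)%:R).

Definition var (v : 'I_Ne -> R) (z : 'I_Ne -> R) : R :=
  (Nx%:R)^-1 * \sum_k (Hv z k * v k - mu v z) ^+ 2.

Definition J (z : 'I_Ne -> R) : R :=
  - entropy z + l1 / 2 * (var xr z + var yr z) + l2 / 2 * \sum_k (Hv z k) ^+ 2.

End Objective.

From HB Require Import structures.
From mathcomp Require Import all_boot all_order all_algebra.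
From mathcomp Require Import all_classical all_reals.
From mathcomp Require Import exp.
Import Order.TTheory GRing.Theory Num.Theory.
Local Open Scope ring_scope.

(* The variance and cardinality terms of J, as well as the warp parameters
   theta, only see z through the Heaviside vector H(z); since H is idempotent
   they take the same value at z and at H(z).  It therefore suffices to show
   that the entropy grows, pixel by pixel: E(z) <= E(H(z)).  At a fixed pixel
   the image is a sum  I(z) = sum_k z_k d_k  with the same 0/1 indicators d_k
   for z and H(z).  Since 0 <= z_k <= H(z_k), we get 0 <= I(z) <= I(H(z)),
   and I(H(z)) is a natural number.  Finally a log a is nonpositive on [0,1],
   nonnegative and nondecreasing on [1,+oo), so a |-> a log a is dominated
   at any natural number n by its value at n on the whole interval [0,n]. *)

Section XLogX.
Context {R : realType}.
Implicit Types a b : R.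

Lemma xlogx_le0 a : 0 <= a <= 1 -> xlogx a <= 0.
Proof.
case/andP=> a0 a1; rewrite /xlogx; case: eqP => // /eqP a_neq0.
have a_gt0 : 0 < a by rewrite lt_def a_neq0 a0.
by rewrite mulr_ge0_le0 ?ln_le0 // ltW.
Qed.

Lemma xlogx_ler_ge1 a b : 1 <= a -> a <= b -> xlogx a <= xlogx b.
Proof.
move=> a1 ab; have a_gt0 : 0 < a by apply: lt_le_trans a1.
have b_gt0 : 0 < b by apply: lt_le_trans ab.
rewrite /xlogx !gt_eqF //.
by apply: ler_pM; rewrite ?ln_ge0 ?ler_ln ?posrE // ltW.
Qed.

(* The value at 1 separates the two regimes above. *)
Lemma xlogx1 : xlogx (1 : R) = 0.
Proof. by rewrite /xlogx oner_eq0 ln1 mulr0. Qed.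

Lemma xlogx_le_nat a (n : nat) : 0 <= a <= n%:R -> xlogx a <= xlogx n%:R.
Proof.
case/andP=> a0 an; case: n an => [|n] an.
  by have -> : a = 0 by apply/eqP; rewrite eq_le a0 andbT.
have n1 : 1 <= n.+1%:R :> R by rewrite ler1n.
have [a1|a1] := leP a 1; last exact: xlogx_ler_ge1 (ltW a1) an.
apply: (@le_trans _ _ 0); first by apply: xlogx_le0; rewrite a0 a1.
by rewrite -xlogx1; apply: xlogx_ler_ge1.
Qed.

End XLogX.

Section Heaviside.
Context {R : realType}.
Implicit Type s : R.

Lemma heav01 s : heav s = 0 \/ heav s = 1.
Proof. by rewrite /heav; case: ifP; [right|left]. Qed.

Lemma heavK s : heav (heav s) = heav s.
Proof. by rewrite /heav; case: (0 < s); rewrite ?ltr01 ?ltxx. Qed.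

Lemma HvK (Ne : nat) (z : 'I_Ne -> R) : Hv (Hv z) = Hv z.
Proof. by apply: funext => k; rewrite /Hv heavK. Qed.

Lemma heav_ge s : 0 <= s <= 1 -> s <= heav s.
Proof. by case/andP=> s0 s1; rewrite /heav; case: ltrP. Qed.

End Heaviside.

Section Counting.
Context {R : realType} {I : finType}.
Implicit Types w d : I -> R.

Definition indicator d := forall k, d k = 0 \/ d k = 1.

Lemma sum_indicator_nat d : indicator d -> exists n : nat, \sum_k d k = n%:R.
Proof.
move=> d01; elim/big_ind: _ => [|a b [m ->] [p ->]|k _].
- by exists 0%N.
- by exists (m + p)%N; rewrite natrD.
- by case: (d01 k) => ->; [exists 0%N | exists 1%N].
Qed.

Lemma xlogx_weighted_count_le w d :
  (forall k, 0 <= w k <= 1) -> indicator d ->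
  xlogx (\sum_k w k * d k) <= xlogx (\sum_k heav (w k) * d k).
Proof.
move=> w01 d01.
have hd01 : indicator (fun k => heav (w k) * d k).
  move=> k; case: (heav01 (w k)) => ->; first by left; rewrite mul0r.
  by rewrite mul1r; apply: d01.
have [n sum_n] := sum_indicator_nat _ hd01.
rewrite sum_n; apply: xlogx_le_nat; rewrite -sum_n; apply/andP; split.
- apply: sumr_ge0 => k _; have /andP[wk0 _] := w01 k.
  by case: (d01 k) => ->; rewrite ?mulr0 ?mulr1.
- apply: ler_sum => k _; apply: ler_wpM2r; last exact: heav_ge.
  by case: (d01 k) => ->; rewrite ?ler01.
Qed.
End Counting.

Section Entropy.
Context {R : realType} {Nx Ny Ne : nat}.
Variables (x y : 'I_Ne -> nat) (t : 'I_Ne -> R) (t0 : R).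

Lemma delta_indicator (g : 'I_Ne -> R) : indicator (fun k => delta (g k)).
Proof. by move=> k; rewrite /delta; case: ifP; [right|left]. Qed.

Lemma warp_Hv (z : 'I_Ne -> R) : warp x y t t0 (Hv z) = warp x y t t0 z.
Proof. by apply: funext => k; rewrite /warp /theta /mu /nev HvK. Qed.

Lemma entropy_le_Hv (z : 'I_Ne -> R) : (forall k, 0 <= z k <= 1) ->
  entropy Nx Ny x y t t0 z <= entropy Nx Ny x y t t0 (Hv z).
Proof.
move=> z01; apply: ler_sum => i _; apply: ler_sum => j _.
rewrite /img warp_Hv; apply: xlogx_weighted_count_le => //.
exact: delta_indicator.
Qed.

End Entropy.

Theorem mainTheorem3 (R : realType) (Nx Ny Ne : nat)
  (hNx : (1 <= Nx)%N) (hNy : (1 <= Ny)%N) (hNe : (1 <= Ne)%N)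
  (x y : 'I_Ne -> nat) (t : 'I_Ne -> R) (t0 l1 l2 : R)
  (hx : forall k, (1 <= x k <= Nx)%N) (hy : forall k, (1 <= y k <= Ny)%N)
  (hl1 : 0 <= l1) (hl2 : 0 <= l2)
  (z : 'I_Ne -> R) (hz : forall k, 0 <= z k <= 1) :
  J Nx Ny x y t t0 l1 l2 (Hv z) <= J Nx Ny x y t t0 l1 l2 z.
Proof.
(* Only the entropy term of J sees more of z than its support H(z). *)
rewrite /J /var /mu /nev HvK !lerD2r lerN2.
exact: entropy_le_Hv.
Qed.
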